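(* Let $X$ (treatment) and $Y$ (effect) be binary variables, with values $x,x'$ and $y,y'$ respectively. Suppose we are given $m$ experimental samples and $n$ observational samples, and the experimental quantities $P(y_x),P(y_{x'})$ and the observational quantities $P(y), P(x,y),P(x,y'),P(x',y),P(x',y')$ are estimated by their sample frequencies. Then, for $0<\alpha<1$, the margin of error, in a $1-\alpha$ confidence interval, of each of the (estimated) Tian–Pearl bounds of PNS, $$\max\{0,\;P(y_x)-P(y_{x'}),\;P(y)-P(y_{x'}),\;P(y_x)-P(y)\}\le \mathrm{PNS}\le \min\{P(y_x),\;P(y'_{x'}),\;P(x,y)+P(x',y'),\;P(y_x)-P(y_{x'})+P(x,y')+P(x',y)\},$$ is at most $z_{1-\alpha/2}\left(\sqrt{\tfrac{1}{m}}+\sqrt{\tfrac{1}{n}}\right)$, where $z_{1-\alpha/2}$ is the $1-\alpha/2$ quantile of the standard normal distribution.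
   Context: Counterfactual notation: $y_x$ denotes the event ''$Y$ would be $y$ had $X$ been $x$'' (i.e. $Y_x=y$), and similarly $y_{x'}$, $y'_x$, $y'_{x'}$. Experimental data yield the causal effects $P(y_x)$, $P(y_{x'})$ (with $P(y'_{x'})=1-P(y_{x'})$); observational data yield the joint probabilities $P(x,y)$ etc. The probability of necessity and sufficiency is $\mathrm{PNS}=P(y_x,y'_{x'})$. For a probability $p$ estimated by the frequency $\hat p$ from $k$ samples (experimental quantities from the $m$ experimental samples, observational quantities from the $n$ observational samples), its margin of error in a $1-\alpha$ confidence interval is the (asymptotic normal) quantity $z_{1-\alpha/2}\sqrt{\hat p(1-\hat p)/k}$, and the margin of error of a sum or difference of such estimates is bounded by the sum of their margins of error. *)

From Stdlib Require Import Reals Lra.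
From Coquelicot Require Import Coquelicot.
Open Scope R_scope.

Definition std_normal_pdf (u : R) : R := exp (- (u ^ 2) / 2) / sqrt (2 * PI).

Definition std_normal_quantile (q z : R) : Prop :=
  is_RInt_gen std_normal_pdf (Rbar_locally m_infty) (at_point z) q.

Definition freq (c k : nat) : R := INR c / INR k.

Definition moe (z : R) (k c : nat) : R :=
  z * sqrt (freq c k * (1 - freq c k) / INR k).

(* Margin of error of the estimated Tian--Pearl lower bound
     max{0, P(y_x)-P(y_x'), P(y)-P(y_x'), P(y_x)-P(y)}:
   each term's margin is the sum of the margins of its estimates (the constant
   0 has margin 0), and the bound's margin is the largest of its terms' margins.
   Experimental counts (out of m): cyx for y_x, cyx' for y_x'.
   Observational counts (out of n): cy for y. *)
Definition moe_lower (z : R) (m n cyx cyx' cy : nat) : R :=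
  Rmax 0
    (Rmax (moe z m cyx + moe z m cyx')
      (Rmax (moe z n cy + moe z m cyx')
            (moe z m cyx + moe z n cy))).

(* Margin of error of the estimated Tian--Pearl upper bound
     min{P(y_x), P(y'_x'), P(x,y)+P(x',y'), P(y_x)-P(y_x')+P(x,y')+P(x',y)}.
   P(y'_x') is estimated by the frequency (m - cyx')/m. *)
Definition moe_upper (z : R) (m n cyx cyx' cxy cxy' cx'y cx'y' : nat) : R :=
  Rmax (moe z m cyx)
    (Rmax (moe z m (m - cyx'))
      (Rmax (moe z n cxy + moe z n cx'y')
            (moe z m cyx + moe z m cyx' + moe z n cxy' + moe z n cx'y))).

From Stdlib Require Import Reals Lra.
From Coquelicot Require Import Coquelicot.
From Stdlib Require Import ssreflect.
Open Scope R_scope.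

(* Since p (1 - p) <= 1/4 for every p, the margin of error of a frequency over
   k samples is at most z / (2 sqrt k), and every term of either bound combines
   at most two experimental and two observational estimates.  This needs z >= 0,
   i.e. that the standard normal puts mass at most 1/2 on (-oo, 0].  That comes
   from the Gaussian integral bound int_0^x exp(-t^2) dt <= sqrt(PI)/2, itself a
   consequence of the identity
     (int_0^x exp(-t^2) dt)^2 + int_0^1 exp(-x^2 (1 + t^2)) / (1 + t^2) dt = PI/4,
   whose left-hand side has zero derivative and equals atan 1 at x = 0. *)

Definition gauss (t : R) : R := exp (- (t * t)).

Definition gauss_int (x : R) : R := RInt gauss 0 x.

Definition gauss_aux_integrand (x t : R) : R := exp (- (x * x) * (1 + t * t)) / (1 + t * t).

Definition gauss_aux (x : R) : R := RInt (gauss_aux_integrand x) 0 1.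

Lemma continuous_gauss x : continuous gauss x.
Proof. by apply: ex_derive_continuous; rewrite /gauss; auto_derive. Qed.

Lemma ex_RInt_gauss a b : ex_RInt gauss a b.
Proof. by apply: ex_RInt_continuous => t _; apply: continuous_gauss. Qed.

Lemma ex_RInt_gauss_aux_integrand x a b : ex_RInt (gauss_aux_integrand x) a b.
Proof.
apply: ex_RInt_continuous => t _; apply: ex_derive_continuous.
rewrite /gauss_aux_integrand; auto_derive; nra.
Qed.

Lemma is_derive_gauss_int x : is_derive gauss_int x (gauss x).
Proof.
apply: is_derive_RInt; last exact: continuous_gauss.
by apply: filter_forall => b; apply: RInt_correct; apply: ex_RInt_gauss.
Qed.

Lemma Derive_gauss_aux_integrand x t :
  Derive (fun u => gauss_aux_integrand u t) x = -2 * x * exp (- (x * x) * (1 + t * t)).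
Proof.
apply: is_derive_unique; rewrite /gauss_aux_integrand; auto_derive; first nra.
field; nra.
Qed.

Lemma continuity_2d_pt_Derive_gauss_aux_integrand x t :
  continuity_2d_pt (fun u v => Derive (fun w => gauss_aux_integrand w v) u) x t.
Proof.
apply: (continuity_2d_pt_ext (fun u v => -2 * u * exp (- (u * u) * (1 + v * v)))).
  by move=> u v; rewrite Derive_gauss_aux_integrand.
apply: continuity_2d_pt_mult.
  apply: continuity_2d_pt_mult; [exact: continuity_2d_pt_const | exact: continuity_2d_pt_id1].
apply: (continuity_1d_2d_pt_comp exp (fun u v => - (u * u) * (1 + v * v))).
  exact: derivable_continuous_pt (derivable_pt_exp _).
apply: continuity_2d_pt_mult.
  apply: continuity_2d_pt_opp.
  apply: continuity_2d_pt_mult; exact: continuity_2d_pt_id1.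
apply: continuity_2d_pt_plus; first exact: continuity_2d_pt_const.
apply: continuity_2d_pt_mult; exact: continuity_2d_pt_id2.
Qed.

(* After differentiating under the integral sign, the substitution s = x t
   turns the integrand into a multiple of gauss. *)
Lemma is_derive_gauss_aux x : is_derive gauss_aux x (-2 * gauss x * gauss_int x).
Proof.
have param_derive : is_derive gauss_aux x
    (RInt (fun t => Derive (fun u => gauss_aux_integrand u t) x) 0 1).
  apply: is_derive_RInt_param.
  - apply: filter_forall => y t _.
    by rewrite /gauss_aux_integrand; auto_derive; nra.
  - by move=> t _; apply: continuity_2d_pt_Derive_gauss_aux_integrand.
  - by apply: filter_forall => y; apply: ex_RInt_gauss_aux_integrand.
suff <- : RInt (fun t => Derive (fun u => gauss_aux_integrand u t) x) 0 1
          = -2 * gauss x * gauss_int x by apply: param_derive.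
rewrite (RInt_ext _ (fun t => scal (-2 * gauss x) (scal x (gauss (x * t + 0))))).
  rewrite RInt_scal; last by apply: ex_RInt_comp_lin; apply: ex_RInt_gauss.
  rewrite RInt_comp_lin; last exact: ex_RInt_gauss.
  by rewrite Rmult_0_r Rmult_1_r !Rplus_0_r.
move=> t _; rewrite Derive_gauss_aux_integrand /gauss /scal /= /mult /=.
have -> : - (x * x) * (1 + t * t) = - (x * x) + - ((x * t + 0) * (x * t + 0)) by ring.
rewrite exp_plus; ring.
Qed.

Lemma gauss_int_sqr_add_gauss_aux x :
  0 <= x -> gauss_int x * gauss_int x + gauss_aux x = PI / 4.
Proof.
have at0 : gauss_int 0 * gauss_int 0 + gauss_aux 0 = PI / 4.
  rewrite /gauss_int /gauss_aux RInt_point /zero /= Rmult_0_l Rplus_0_l.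
  have int_atan : is_RInt (fun t => / (1 + t²)) 0 1 (minus (atan 1) (atan 0)).
    apply: is_RInt_derive => t _; first exact: is_derive_atan.
    by apply: ex_derive_continuous; auto_derive; rewrite /Rsqr; nra.
  rewrite (RInt_ext _ (fun t => / (1 + t²))).
    rewrite (is_RInt_unique _ _ _ _ int_atan) atan_1 atan_0 /minus /plus /opp /=; lra.
  move=> t _; rewrite /gauss_aux_integrand /Rsqr.
  by rewrite Rmult_0_r Ropp_0 Rmult_0_l exp_0 /Rdiv Rmult_1_l.
move=> /Rle_lt_or_eq_dec [x_gt0 | <-] //.
rewrite -at0; symmetry.
apply: (eq_is_derive (fun y => gauss_int y * gauss_int y + gauss_aux y)) => // t _.
have := is_derive_plus _ _ t _ _
  (is_derive_mult _ _ t _ _ (is_derive_gauss_int t) (is_derive_gauss_int t) Rmult_comm)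
  (is_derive_gauss_aux t).
by congr is_derive; rewrite /plus /mult /zero /=; ring.
Qed.

Lemma gauss_int_le x : 0 <= x -> gauss_int x <= sqrt PI / 2.
Proof.
move=> x_ge0.
have int_ge0 : 0 <= gauss_int x.
  apply: RInt_ge_0 => //; first exact: ex_RInt_gauss.
  by move=> t _; apply: Rlt_le; apply: exp_pos.
have aux_ge0 : 0 <= gauss_aux x.
  apply: RInt_ge_0; [lra | exact: ex_RInt_gauss_aux_integrand |].
  move=> t _; apply: Rlt_le; apply: Rdiv_lt_0_compat; [exact: exp_pos | nra].
have := gauss_int_sqr_add_gauss_aux x x_ge0.
have := sqrt_sqrt PI (Rlt_le _ _ PI_RGT_0).
have := sqrt_pos PI.
nra.
Qed.

Lemma RInt_even (f : R -> R) a b :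
  (forall x, f (- x) = f x) -> ex_RInt f (- b) (- a) -> RInt f a b = RInt f (- b) (- a).
Proof.
move=> f_even /RInt_correct /is_RInt_swap /is_RInt_comp_opp /is_RInt_opp.
rewrite opp_opp => int_f; apply: is_RInt_unique.
by apply: (is_RInt_ext _ _ _ _ _ _ int_f) => x _; rewrite f_even opp_opp.
Qed.

Lemma is_RInt_gen_le_at_point (f : R -> R) (Fa : (R -> Prop) -> Prop)
  {FF : ProperFilter Fa} (b l B : R) :
  Fa (fun a => forall v, is_RInt f a b v -> v <= B) ->
  is_RInt_gen f Fa (at_point b) l -> l <= B.
Proof.
move=> bound lim; apply: Rnot_lt_le => B_lt_l.
have eps_gt0 : 0 < l - B by lra.
move/filterlimi_locally: lim => /(_ (mkposreal _ eps_gt0)) [Q P FaQ Pb QP].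
have [a [Qa bound_a]] := filter_ex _ (filter_and _ _ FaQ bound).
have [v [int_v ball_v]] := QP a b Qa Pb.
have := bound_a v int_v.
move: ball_v; rewrite /ball /= /AbsRing_ball /abs /minus /plus /opp /=.
move=> /Rabs_def2; lra.
Qed.

Lemma continuous_std_normal_pdf x : continuous std_normal_pdf x.
Proof. by apply: ex_derive_continuous; rewrite /std_normal_pdf; auto_derive. Qed.

Lemma ex_RInt_std_normal_pdf a b : ex_RInt std_normal_pdf a b.
Proof. by apply: ex_RInt_continuous => x _; apply: continuous_std_normal_pdf. Qed.

Lemma std_normal_pdf_ge0 x : 0 <= std_normal_pdf x.
Proof.
apply: Rlt_le; apply: Rdiv_lt_0_compat; first exact: exp_pos.
by apply: sqrt_lt_R0; have := PI_RGT_0; lra.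
Qed.

Lemma std_normal_pdf_opp x : std_normal_pdf (- x) = std_normal_pdf x.
Proof. by rewrite /std_normal_pdf (_ : (- x) ^ 2 = x ^ 2) //; ring. Qed.

Lemma std_normal_pdf_scale y : sqrt 2 * std_normal_pdf (sqrt 2 * y) = gauss y / sqrt PI.
Proof.
have s2_gt0 : 0 < sqrt 2 by apply: sqrt_lt_R0; lra.
have sPI_gt0 : 0 < sqrt PI by apply: sqrt_lt_R0; apply: PI_RGT_0.
have s2_sqr : sqrt 2 * sqrt 2 = 2 by apply: sqrt_sqrt; lra.
rewrite /std_normal_pdf /gauss sqrt_mult; [|lra|exact: Rlt_le PI_RGT_0].
have -> : - ((sqrt 2 * y) ^ 2) / 2 = - (y * y).
  rewrite (_ : (sqrt 2 * y) ^ 2 = sqrt 2 * sqrt 2 * (y * y)); last by ring.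
  by rewrite s2_sqr; field.
by field; lra.
Qed.

Lemma RInt_std_normal_pdf_0_le c : 0 <= c -> RInt std_normal_pdf 0 c <= 1 / 2.
Proof.
move=> c_ge0.
have s2_gt0 : 0 < sqrt 2 by apply: sqrt_lt_R0; lra.
have sPI_gt0 : 0 < sqrt PI by apply: sqrt_lt_R0; apply: PI_RGT_0.
have := RInt_comp_lin std_normal_pdf (sqrt 2) 0 0 (c / sqrt 2) (ex_RInt_std_normal_pdf _ _).
rewrite Rmult_0_r !Rplus_0_r (_ : sqrt 2 * (c / sqrt 2) = c); last by field; lra.
move=> <-.
rewrite (RInt_ext _ (fun y => scal (/ sqrt PI) (gauss y))); last first.
  by move=> y _; rewrite Rplus_0_r /scal /= /mult /= std_normal_pdf_scale Rmult_comm.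
rewrite RInt_scal; last exact: ex_RInt_gauss.
have := gauss_int_le (c / sqrt 2) (Rdiv_le_0_compat _ _ c_ge0 s2_gt0).
rewrite /gauss_int /scal /= /mult /=.
move=> int_le.
apply: (Rle_trans _ (/ sqrt PI * (sqrt PI / 2))).
  by apply: Rmult_le_compat_l => //; apply: Rlt_le; apply: Rinv_0_lt_compat.
by right; field; lra.
Qed.

Lemma RInt_std_normal_pdf_le a b : a <= b <= 0 -> RInt std_normal_pdf a b <= 1 / 2.
Proof.
move=> [a_le_b b_le0].
have tail_ge0 : 0 <= RInt std_normal_pdf b 0.
  apply: RInt_ge_0 => //; first exact: ex_RInt_std_normal_pdf.
  by move=> x _; apply: std_normal_pdf_ge0.
have := RInt_Chasles std_normal_pdf a b 0
  (ex_RInt_std_normal_pdf _ _) (ex_RInt_std_normal_pdf _ _).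
rewrite (RInt_even _ a 0 std_normal_pdf_opp (ex_RInt_std_normal_pdf _ _)) Ropp_0.
have := RInt_std_normal_pdf_0_le (- a) ltac:(lra).
rewrite /plus /=; lra.
Qed.

Lemma std_normal_quantile_le_half q z : std_normal_quantile q z -> z <= 0 -> q <= 1 / 2.
Proof.
move=> quantile_z z_le0.
apply: (is_RInt_gen_le_at_point std_normal_pdf (Rbar_locally m_infty) z) quantile_z.
exists z => a a_lt_z v /is_RInt_unique <-.
by apply: RInt_std_normal_pdf_le; lra.
Qed.

Lemma bernoulli_variance_le p : p * (1 - p) <= 1 / 4.
Proof. by have := Rle_0_sqr (p - 1 / 2); rewrite /Rsqr; lra. Qed.

(* No hypothesis on k or c is needed: p (1 - p) <= 1/4 for every real p, and
   for k = 0 both sides vanish since / 0 = 0. *)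
Lemma moe_le z k c : 0 <= z -> moe z k c <= z * sqrt (1 / INR k) / 2.
Proof.
move=> z_ge0.
have inv_k_ge0 : 0 <= / INR k.
  have [k_gt0 | <-] := Rle_lt_or_eq_dec _ _ (pos_INR k); last by rewrite Rinv_0; lra.
  by apply: Rlt_le; apply: Rinv_0_lt_compat.
have sqrt4 : sqrt 4 = 2.
  by rewrite (_ : 4 = 2 * 2); [apply: sqrt_square; lra | ring].
have -> : z * sqrt (1 / INR k) / 2 = z * sqrt (1 / 4 / INR k).
  rewrite (_ : 1 / 4 / INR k = 1 / INR k / 4); last by rewrite /Rdiv; ring.
  rewrite [sqrt (1 / INR k / 4)]sqrt_div ?sqrt4; [field | | lra].
  by rewrite /Rdiv Rmult_1_l.
rewrite /moe; apply: Rmult_le_compat_l => //; apply: sqrt_le_1_alt.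
exact: Rmult_le_compat_r inv_k_ge0 (bernoulli_variance_le _).
Qed.

Theorem theorem1 (alpha z : R) (m n : nat)
  (cyx cyx' cy cxy cxy' cx'y cx'y' : nat) :
  0 < alpha < 1 ->
  std_normal_quantile (1 - alpha / 2) z ->
  (0 < m)%nat -> (0 < n)%nat ->
  (cyx <= m)%nat -> (cyx' <= m)%nat ->
  (cy <= n)%nat -> (cxy <= n)%nat -> (cxy' <= n)%nat ->
  (cx'y <= n)%nat -> (cx'y' <= n)%nat ->
  moe_lower z m n cyx cyx' cy <= z * (sqrt (1 / INR m) + sqrt (1 / INR n)) /\
  moe_upper z m n cyx cyx' cxy cxy' cx'y cx'y'
    <= z * (sqrt (1 / INR m) + sqrt (1 / INR n)).
Proof.
move=> alpha_bounds quantile_z _ _ _ _ _ _ _ _ _.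
have z_ge0 : 0 <= z.
  apply: Rnot_lt_le => z_lt0.
  have := std_normal_quantile_le_half _ _ quantile_z (Rlt_le _ _ z_lt0); lra.
set em := z * sqrt (1 / INR m) / 2.
set en := z * sqrt (1 / INR n) / 2.
have em_ge0 : 0 <= em by have := sqrt_pos (1 / INR m); rewrite /em; nra.
have en_ge0 : 0 <= en by have := sqrt_pos (1 / INR n); rewrite /en; nra.
have -> : z * (sqrt (1 / INR m) + sqrt (1 / INR n)) = 2 * em + 2 * en.
  by rewrite /em /en; field.
have moe_m c : moe z m c <= em := moe_le z m c z_ge0.
have moe_n c : moe z n c <= en := moe_le z n c z_ge0.
have := moe_m cyx; have := moe_m cyx'; have := moe_m (m - cyx')%nat.
have := moe_n cy; have := moe_n cxy; have := moe_n cxy'.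
have := moe_n cx'y; have := moe_n cx'y'.
rewrite /moe_lower /moe_upper => *.
by split; repeat apply: Rmax_lub; lra.
Qed.
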